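(* Let $L\geq 2$, $d,M,J,N\geq 1$, let $X\in\mathbb{R}^{d\times N}$, and let $A\in\mathbb{R}^{J\times N}$ have one-hot columns. Suppose $\sigma:\mathbb{R}\to\mathbb{R}$ is Lipschitz continuous, i.e. $|\sigma(z_1)-\sigma(z_2)|\leq B|z_1-z_2|$ for some $B>0$ and all $z_1,z_2\in\mathbb{R}$. Then for all $W_1\in\mathbb{R}^{M\times d}$, $W_2,\dots,W_{L-1}\in\mathbb{R}^{M\times M}$, $W_L\in\mathbb{R}^{J\times M}$, $b_1,\dots,b_{L-1}\in\mathbb{R}^{M}$ and $c_1,\dots,c_{L-1}\in\mathbb{R}^{M\times N}$, $$\mathcal{L}(\phi_{\mathrm{FNN}}(X;\theta),A)\leq C_B\cdot\sqrt{L-1}\cdot \mathcal{L}^{\mathrm{FNN}}_{\mathrm S},$$ where $C_B=\max\{\sqrt2,\,2B,\,2B^{L-1}\}$.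
   Context: Softmax and cross-entropy: for $\boldsymbol z\in\mathbb{R}^J$ and one-hot $\boldsymbol\alpha\in\mathbb{R}^J$ (entries in $\{0,1\}$ summing to $1$), $\ell(\boldsymbol z,\boldsymbol\alpha)=-\sum_j\alpha_j\ln\big(e^{z_j}/\sum_{k}e^{z_k}\big)$. For $Z=[\boldsymbol z_1\cdots\boldsymbol z_N]$, $A=[\boldsymbol\alpha_1\cdots\boldsymbol\alpha_N]$: $\mathcal{L}_{\mathrm{vec}}(Z,A)=[\ell(\boldsymbol z_n,\boldsymbol\alpha_n)]_{n=1}^N\in\mathbb{R}^N$ and $\mathcal{L}(Z,A)=\frac1N\sum_{n=1}^N\ell(\boldsymbol z_n,\boldsymbol\alpha_n)$. The fully connected network with parameters $\theta=\{W_L,W_l,b_l\}_{l=1}^{L-1}$ is $\phi_{\mathrm{FNN}}(\boldsymbol x;\theta)=W_L\sigma(W_{L-1}\sigma(\cdots\sigma(W_1\boldsymbol x+b_1)\cdots)+b_{L-1})$ with $\sigma$ applied entrywise, and $\phi_{\mathrm{FNN}}(X;\theta)$ is the matrix whose $n$-th column is $\phi_{\mathrm{FNN}}$ applied to the $n$-th column of $X$. With $\mathbf 1\in\mathbb{R}^N$ the all-ones vector, set weights $\omega_l=\prod_{j=l+1}^{L}\|W_j\|_{\mathrm F}^2$ for $l=1,\dots,L-1$, and $$S=\|\mathcal{L}_{\mathrm{vec}}(W_L\sigma(c_{L-1}),A)\|_2^2+\sum_{l=2}^{L-1}\omega_l\|W_l\sigma(c_{l-1})+b_l\mathbf 1^\top-c_l\|_{\mathrm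 F}^2+\omega_1\|W_1X+b_1\mathbf 1^\top-c_1\|_{\mathrm F}^2,$$ and the layer separation loss $\mathcal{L}^{\mathrm{FNN}}_{\mathrm S}=\frac{1}{\sqrt N}S^{1/2}$. *)

From HB Require Import structures.
From mathcomp Require Import all_boot all_order all_algebra.
From mathcomp Require Import all_classical all_reals all_analysis.
Set Implicit Arguments. Unset Strict Implicit. Unset Printing Implicit Defensive.
Import Order.TTheory GRing.Theory Num.Theory.
Local Open Scope ring_scope.

Section Defs.
Variable R : realType.

Definition frob2 m n (A : 'M[R]_(m, n)) : R := \sum_(i < m) \sum_(j < n) A i j ^+ 2.

Definition one_hot J (a : 'cV[R]_J) : Prop :=
  (forall j, a j 0 = 0 \/ a j 0 = 1) /\ \sum_(j < J) a j 0 = 1.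

Definition ce_loss J (z a : 'cV[R]_J) : R :=
  - \sum_(j < J) a j 0 * ln (expR (z j 0) / \sum_(k < J) expR (z k 0)).

Definition Lvec J N (Z A : 'M[R]_(J, N)) (n : 'I_N) : R := ce_loss (col n Z) (col n A).

Definition Lmean J N (Z A : 'M[R]_(J, N)) : R := N%:R^-1 * \sum_(n < N) Lvec Z A n.

Definition act (sigma : R -> R) m n (Z : 'M[R]_(m, n)) : 'M[R]_(m, n) := map_mx sigma Z.

(* Network parameters: W1 : M x d, W l : M x M (used for l = 2..L-1),
   WL : J x M, b l : M (used for l = 1..L-1).
   hidden k x = output of hidden layer k+1 on input x. *)
Fixpoint hidden (sigma : R -> R) d M (W1 : 'M[R]_(M, d)) (W : nat -> 'M[R]_M)
  (b : nat -> 'cV[R]_M) (k : nat) (x : 'cV[R]_d) : 'cV[R]_M :=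
  match k with
  | 0 => act sigma (W1 *m x + b 1%N)
  | k'.+1 => act sigma (W k.+1 *m hidden sigma W1 W b k' x + b k.+1)
  end.

Definition phi_FNN (sigma : R -> R) (L : nat) d M J (W1 : 'M[R]_(M, d))
  (W : nat -> 'M[R]_M) (WL : 'M[R]_(J, M)) (b : nat -> 'cV[R]_M)
  (x : 'cV[R]_d) : 'cV[R]_J :=
  WL *m hidden sigma W1 W b (L - 2) x.

Definition phi_FNN_mx (sigma : R -> R) (L : nat) d M J N (W1 : 'M[R]_(M, d))
  (W : nat -> 'M[R]_M) (WL : 'M[R]_(J, M)) (b : nat -> 'cV[R]_M)
  (X : 'M[R]_(d, N)) : 'M[R]_(J, N) :=
  \matrix_(j < J, n < N) phi_FNN sigma L W1 W WL b (col n X) j 0.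

Definition frobW (L : nat) d M J (W1 : 'M[R]_(M, d)) (W : nat -> 'M[R]_M)
  (WL : 'M[R]_(J, M)) (j : nat) : R :=
  if j == 1%N then frob2 W1 else if j == L then frob2 WL else frob2 (W j).

Definition omega (L : nat) d M J (W1 : 'M[R]_(M, d)) (W : nat -> 'M[R]_M)
  (WL : 'M[R]_(J, M)) (l : nat) : R :=
  \prod_(l.+1 <= j < L.+1) frobW L W1 W WL j.

Definition ones_row N : 'rV[R]_N := const_mx 1.

Definition S_sep (sigma : R -> R) (L : nat) d M J N (X : 'M[R]_(d, N)) (A : 'M[R]_(J, N))
  (W1 : 'M[R]_(M, d)) (W : nat -> 'M[R]_M) (WL : 'M[R]_(J, M))
  (b : nat -> 'cV[R]_M) (c : nat -> 'M[R]_(M, N)) : R :=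
  \sum_(n < N) (Lvec (WL *m act sigma (c (L.-1))) A n) ^+ 2
  + \sum_(2 <= l < L) omega L W1 W WL l *
        frob2 (W l *m act sigma (c l.-1) + b l *m ones_row N - c l)
  + omega L W1 W WL 1 * frob2 (W1 *m X + b 1%N *m ones_row N - c 1%N).

Definition LS_FNN (sigma : R -> R) (L : nat) d M J N (X : 'M[R]_(d, N)) (A : 'M[R]_(J, N))
  (W1 : 'M[R]_(M, d)) (W : nat -> 'M[R]_M) (WL : 'M[R]_(J, M))
  (b : nat -> 'cV[R]_M) (c : nat -> 'M[R]_(M, N)) : R :=
  (Num.sqrt N%:R)^-1 * Num.sqrt (S_sep sigma L X A W1 W WL b c).

End Defs.

From HB Require Import structures.
From mathcomp Require Import all_boot all_order all_algebra.
From mathcomp Require Import all_classical all_reals all_analysis.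
From mathcomp Require Import ring lra.
Set Implicit Arguments. Unset Strict Implicit. Unset Printing Implicit Defensive.
Import Order.TTheory GRing.Theory Num.Theory.
Local Open Scope ring_scope.

(* By convexity of log-sum-exp, the cross-entropy increment between logits z and
   z' is at most <softmax z' - alpha, z' - z>, and a probability vector lies within
   distance sqrt 2 of a one-hot vector; so, after Cauchy-Schwarz over the N samples,
   the mean loss of the network differs from that of W_L sigma(c_{L-1}) by at most
   sqrt(2/N) times the Frobenius distance of the two outputs.  Propagating the layer
   residuals W_l sigma(c_{l-1}) + b_l 1^T - c_l forward, each layer multiplies the
   accumulated error by at most B ||W_l||_F, which is where the weights omega_l come
   from.  A last Cauchy-Schwarz over the L terms, whose coefficients 1 and
   sqrt 2 B^k (1 <= k <= L - 1) have squares summing to at most C_B^2 (L - 1),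
   gives the factor C_B sqrt(L - 1). *)

Section CauchySchwarz.
Variables (R : realType) (I : Type) (r : seq I) (x y : I -> R).

(* Lagrange's identity: the defect is half the sum of the squares (x_i y_j - x_j y_i)^2. *)
Lemma cauchy_schwarz_sqr :
  (\sum_(i <- r) x i * y i) ^+ 2 <= (\sum_(i <- r) x i ^+ 2) * (\sum_(i <- r) y i ^+ 2).
Proof.
have lagrange : \sum_(i <- r) \sum_(j <- r) (x i * y j - x j * y i) ^+ 2 =
    \sum_(i <- r) \sum_(j <- r) x i ^+ 2 * y j ^+ 2
  + \sum_(i <- r) \sum_(j <- r) y i ^+ 2 * x j ^+ 2
  - 2 * \sum_(i <- r) \sum_(j <- r) (x i * y i) * (x j * y j).
  rewrite mulr_sumr -!big_split -sumrB /=; apply: eq_bigr => i _.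
  rewrite mulr_sumr -!big_split -sumrB /=; apply: eq_bigr => j _; ring.
have : 0 <= \sum_(i <- r) \sum_(j <- r) (x i * y j - x j * y i) ^+ 2.
  by apply: sumr_ge0 => i _; apply: sumr_ge0 => j _; exact: sqr_ge0.
rewrite lagrange -!big_distrlr /= expr2; lra.
Qed.

Lemma cauchy_schwarz :
  \sum_(i <- r) x i * y i
  <= Num.sqrt (\sum_(i <- r) x i ^+ 2) * Num.sqrt (\sum_(i <- r) y i ^+ 2).
Proof.
rewrite -sqrtrM; last by apply: sumr_ge0 => i _; exact: sqr_ge0.
apply: le_trans (ler_norm _) _.
by rewrite -sqrtr_sqr ler_sqrt ?cauchy_schwarz_sqr // mulr_ge0 //;
  apply: sumr_ge0 => i _; exact: sqr_ge0.
Qed.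

End CauchySchwarz.

Lemma sum_le_sqrt_card (R : realType) n (x : 'I_n -> R) :
  \sum_(i < n) x i <= Num.sqrt n%:R * Num.sqrt (\sum_(i < n) x i ^+ 2).
Proof.
have := cauchy_schwarz (index_enum 'I_n) (fun=> 1) x.
by rewrite expr1n sumr_const card_ord (eq_bigr x) // => i _; rewrite mul1r.
Qed.

Section ConstantCB.
Variables (R : realType) (B : R).
Hypothesis B_ge0 : 0 <= B.

Definition C_B n : R := Num.max (Num.sqrt 2) (Num.max (2 * B) (2 * B ^+ n)).

Lemma C_B_ge_sqrt2 n : Num.sqrt 2 <= C_B n.
Proof. by rewrite le_max lexx. Qed.

Lemma C_B_ge0 n : 0 <= C_B n.
Proof. exact: le_trans (sqrtr_ge0 2) (C_B_ge_sqrt2 n). Qed.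

Lemma expr_le_C_B k n : (0 < k <= n)%N -> 2 * B ^+ k <= C_B n.
Proof.
move=> /andP[k0 kn]; rewrite !le_max ![2 * _ <= 2 * _]ler_pM2l //.
case: (lerP B 1) => [B1 | /ltW B1]; apply/orP; right; apply/orP; [left | right].
- by rewrite -[leRHS]expr1 ler_wiXn2l.
- exact: ler_weXn2l.
Qed.

Lemma sum_weights_sqr_le m :
  1 + \sum_(0 <= l < m.+1) (Num.sqrt 2 * B ^+ (m.+1 - l)) ^+ 2 <= C_B m.+1 ^+ 2 * m.+1%:R.
Proof.
set C := C_B m.+1.
have sqrt2_sqr : Num.sqrt 2 ^+ 2 = 2 :> R by rewrite sqr_sqrtr.
have C_sqr_ge2 : 2 <= C ^+ 2.
  by rewrite -sqrt2_sqr ler_pXn2r ?nnegrE ?sqrtr_ge0 ?C_B_ge0 ?C_B_ge_sqrt2.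
have weight_le l : (l < m.+1)%N -> (Num.sqrt 2 * B ^+ (m.+1 - l)) ^+ 2 <= C ^+ 2 / 2.
  move=> lm; have := expr_le_C_B (k := m.+1 - l) (n := m.+1).
  rewrite subn_gt0 lm leq_subr exprMn sqrt2_sqr -/C => /(_ isT) le_C.
  have : 0 <= C := C_B_ge0 _; have := exprn_ge0 (m.+1 - l) B_ge0; nra.
apply: le_trans (_ : C ^+ 2 / 2 + \sum_(0 <= l < m.+1) C ^+ 2 / 2 <= _).
  apply: lerD; first lra.
  by rewrite big_nat_cond [leRHS]big_nat_cond; apply: ler_sum => l /andP[/andP[_ ?] _];
    exact: weight_le.
rewrite sumr_const_nat subn0 -mulr_natr.
have m1 : 1 <= m.+1%:R :> R by rewrite ler1n.
nra.
Qed.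

Lemma weighted_sum_le (s0 : R) (s : nat -> R) m :
  s0 + Num.sqrt 2 * \sum_(0 <= l < m.+1) B ^+ (m.+1 - l) * s l
  <= C_B m.+1 * Num.sqrt m.+1%:R * Num.sqrt (s0 ^+ 2 + \sum_(0 <= l < m.+1) s l ^+ 2).
Proof.
pose x i := if i is l.+1 then Num.sqrt 2 * B ^+ (m.+1 - l) else 1.
pose y i := if i is l.+1 then s l else s0.
have := cauchy_schwarz (index_iota 0 m.+2) x y.
rewrite ![\sum_(0 <= i < m.+2) _]big_nat_recl //= mul1r expr1n mulr_sumr => cs.
rewrite (eq_bigr (fun i => Num.sqrt 2 * B ^+ (m.+1 - i) * s i)) => [|i _]; last exact: mulrA.
apply: le_trans cs _; rewrite ler_wpM2r ?sqrtr_ge0 //.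
rewrite -[C_B _]ger0_norm ?C_B_ge0 // -sqrtr_sqr -sqrtrM ?sqr_ge0 //.
by rewrite ler_sqrt ?mulr_ge0 ?sqr_ge0 ?C_B_ge0 //; exact: sum_weights_sqr_le.
Qed.

End ConstantCB.

Section Frobenius.
Variable R : realType.
Implicit Types m n p : nat.

Definition frob m n (A : 'M[R]_(m, n)) : R := Num.sqrt (frob2 A).

Lemma frob2_ge0 m n (A : 'M[R]_(m, n)) : 0 <= frob2 A.
Proof. by apply: sumr_ge0 => i _; apply: sumr_ge0 => j _; exact: sqr_ge0. Qed.

Lemma frob_ge0 m n (A : 'M[R]_(m, n)) : 0 <= frob A.
Proof. exact: sqrtr_ge0. Qed.

Lemma frob_sqr m n (A : 'M[R]_(m, n)) : frob A ^+ 2 = frob2 A.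
Proof. by rewrite sqr_sqrtr ?frob2_ge0. Qed.

Lemma frob2_cV m (v : 'cV[R]_m) : frob2 v = \sum_(i < m) v i 0 ^+ 2.
Proof. by apply: eq_bigr => i _; rewrite big_ord1. Qed.

Lemma frob2_col_sum m n (A : 'M[R]_(m, n)) : frob2 A = \sum_(j < n) frob2 (col j A).
Proof.
rewrite [LHS]/frob2 exchange_big; apply: eq_bigr => j _.
by rewrite frob2_cV; apply: eq_bigr => i _; rewrite mxE.
Qed.

Lemma frobD m n (A B : 'M[R]_(m, n)) : frob (A + B) <= frob A + frob B.
Proof.
have cs : \sum_(i < m) \sum_(j < n) A i j * B i j <= frob A * frob B.
  by rewrite /frob /frob2 !pair_big; exact: cauchy_schwarz.
rewrite -[leRHS]ger0_norm ?addr_ge0 ?frob_ge0 // -sqrtr_sqr ler_sqrt ?sqr_ge0 //.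
rewrite sqrrD !frob_sqr -/(frob A) -/(frob B).
have -> : frob2 (A + B) = frob2 A + 2 * \sum_(i < m) \sum_(j < n) A i j * B i j + frob2 B.
  rewrite /frob2 mulr_sumr -!big_split /=; apply: eq_bigr => i _.
  rewrite mulr_sumr -!big_split /=; apply: eq_bigr => j _; rewrite mxE; ring.
lra.
Qed.

Lemma frob2_mulmx m n p (A : 'M[R]_(m, n)) (B : 'M[R]_(n, p)) :
  frob2 (A *m B) <= frob2 A * frob2 B.
Proof.
rewrite /frob2 mulr_suml; apply: ler_sum => i _.
rewrite exchange_big mulr_sumr; apply: ler_sum => k _.
by rewrite mxE; exact: cauchy_schwarz_sqr.
Qed.

Lemma frob_mulmx m n p (A : 'M[R]_(m, n)) (B : 'M[R]_(n, p)) :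
  frob (A *m B) <= frob A * frob B.
Proof. by rewrite -sqrtrM ?frob2_ge0 // ler_sqrt ?mulr_ge0 ?frob2_ge0 ?frob2_mulmx. Qed.

Lemma sum_frob_col_le m n (A : 'M[R]_(m, n)) :
  \sum_(j < n) frob (col j A) <= Num.sqrt n%:R * frob A.
Proof.
apply: le_trans (sum_le_sqrt_card _) _.
by under eq_bigr do rewrite frob_sqr; rewrite -frob2_col_sum.
Qed.

Variables (sigma : R -> R) (B : R).
Hypothesis B_ge0 : 0 <= B.
Hypothesis sigma_lip : forall z1 z2, `|sigma z1 - sigma z2| <= B * `|z1 - z2|.

Lemma frob_act_sub m n (U C : 'M[R]_(m, n)) :
  frob (act sigma U - act sigma C) <= B * frob (U - C).
Proof.
rewrite /frob -[B]ger0_norm ?B_ge0 // -sqrtr_sqr -sqrtrM ?sqr_ge0 // ler_sqrt;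
  last by rewrite mulr_ge0 ?sqr_ge0 ?frob2_ge0.
rewrite /frob2 mulr_sumr; apply: ler_sum => i _.
rewrite mulr_sumr; apply: ler_sum => j _; rewrite !mxE.
rewrite -[_ ^+ 2]real_normK ?num_real // -[(U i j - C i j) ^+ 2]real_normK ?num_real //.
by rewrite -exprMn ler_pXn2r ?nnegrE ?mulr_ge0 ?normr_ge0 ?B_ge0.
Qed.

Lemma frob_mulmx_act_sub m n p (V : 'M[R]_(m, n)) (U C : 'M[R]_(n, p)) :
  frob (V *m (act sigma U - act sigma C)) <= frob V * (B * frob (U - C)).
Proof.
apply: le_trans (frob_mulmx _ _) _.
by rewrite ler_wpM2l ?frob_ge0 ?frob_act_sub.
Qed.

End Frobenius.

Section CrossEntropy.
Variables (R : realType) (J : nat).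
Hypothesis J_gt0 : (0 < J)%N.
Implicit Types z a : 'cV[R]_J.

Definition sumexp z : R := \sum_(k < J) expR (z k 0).

Definition softmax z : 'cV[R]_J := \col_k (expR (z k 0) / sumexp z).

Lemma sumexp_gt0 z : 0 < sumexp z.
Proof.
rewrite /sumexp (bigD1 (Ordinal J_gt0)) //= ltr_pwDl ?expR_gt0 //.
by apply: sumr_ge0 => k _; exact: expR_ge0.
Qed.

Lemma softmax_ge0 z k : 0 <= softmax z k 0.
Proof. by rewrite mxE divr_ge0 ?expR_ge0 ?(ltW (sumexp_gt0 z)). Qed.

Lemma softmax_le1 z k : softmax z k 0 <= 1.
Proof.
rewrite mxE ler_pdivrMr ?sumexp_gt0 // mul1r /sumexp (bigD1 k) //= lerDl.
by apply: sumr_ge0 => i _; exact: expR_ge0.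
Qed.

Lemma sum_softmax z : \sum_k softmax z k 0 = 1.
Proof.
under eq_bigr do rewrite mxE.
by rewrite -mulr_suml divff // gt_eqF ?sumexp_gt0.
Qed.

Lemma ce_lossE z a : \sum_j a j 0 = 1 ->
  ce_loss z a = ln (sumexp z) - \sum_j a j 0 * z j 0.
Proof.
move=> a1; rewrite /ce_loss -/(sumexp z).
have lnE j : ln (expR (z j 0) / sumexp z) = z j 0 - ln (sumexp z).
  by rewrite lnM ?posrE ?expR_gt0 ?invr_gt0 ?sumexp_gt0 // lnV ?posrE ?sumexp_gt0 // expRK.
under eq_bigr do rewrite lnE mulrBr.
by rewrite sumrB -mulr_suml a1 mul1r opprB.
Qed.

(* Convexity of the log-sum-exp function, whose gradient at z' is softmax z'. *)
Lemma ln_sumexp_ge z z' :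
  ln (sumexp z') + \sum_k softmax z' k 0 * (z k 0 - z' k 0) <= ln (sumexp z).
Proof.
set p := fun k => softmax z' k 0; set d := fun k => z k 0 - z' k 0.
set mu := \sum_k p k * d k.
have p1 : \sum_k p k = 1 := sum_softmax z'.
have sumexpE : sumexp z = sumexp z' * \sum_k p k * expR (d k).
  rewrite /sumexp mulr_sumr; apply: eq_bigr => k _.
  have -> : expR (z k 0) = expR (z' k 0) * expR (d k).
    by rewrite -expRD; congr expR; rewrite /d; ring.
  rewrite /p mxE -/(sumexp z'); field.
  by rewrite gt_eqF ?sumexp_gt0.
(* Jensen through the tangent line of expR at mu. *)
have jensen : expR mu <= \sum_k p k * expR (d k).
  have weights1 : \sum_k (p k + p k * d k - mu * p k) = 1.
    by rewrite sumrB big_split /= -mulr_sumr p1 -/mu; ring.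
  rewrite -[expR mu]mulr1 -weights1 mulr_sumr; apply: ler_sum => k _.
  have -> : expR mu * (p k + p k * d k - mu * p k) = p k * (expR mu * (1 + (d k - mu))).
    by ring.
  have -> : expR (d k) = expR mu * expR (d k - mu).
    by rewrite -expRD; congr expR; ring.
  by rewrite ler_wpM2l ?softmax_ge0 // ler_wpM2l ?expR_ge0 ?expR_ge1Dx.
rewrite sumexpE lnM ?posrE ?sumexp_gt0 ?(lt_le_trans (expR_gt0 mu) jensen) //.
by rewrite lerD2l -ler_expR lnK ?posrE ?(lt_le_trans (expR_gt0 mu) jensen).
Qed.

Lemma softmax_dist_one_hot z a : one_hot a ->
  \sum_k (softmax z k 0 - a k 0) ^+ 2 <= 2.
Proof.
move=> [a01 a1]; apply: le_trans (_ : \sum_k (softmax z k 0 + a k 0) <= 2).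
  apply: ler_sum => k _.
  have := softmax_ge0 z k; have := softmax_le1 z k.
  by case: (a01 k) => ->; nra.
by rewrite big_split /= sum_softmax a1.
Qed.

Lemma ce_loss_lipschitz z z' a : one_hot a ->
  ce_loss z' a <= ce_loss z a + Num.sqrt 2 * frob (z' - z).
Proof.
move=> [a01 a1]; rewrite !ce_lossE //.
have tangent := ln_sumexp_ge z z'.
have cs := cauchy_schwarz (index_enum 'I_J)
  (fun k => softmax z' k 0 - a k 0) (fun k => z' k 0 - z k 0).
have frobE : frob (z' - z) = Num.sqrt (\sum_k (z' k 0 - z k 0) ^+ 2).
  by rewrite /frob frob2_cV; under eq_bigr do rewrite !mxE.
rewrite -frobE in cs.
have dist : Num.sqrt (\sum_k (softmax z' k 0 - a k 0) ^+ 2) * frob (z' - z)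
    <= Num.sqrt 2 * frob (z' - z).
  by rewrite ler_wpM2r ?frob_ge0 // ler_sqrt ?softmax_dist_one_hot.
have gapE : \sum_k (softmax z' k 0 - a k 0) * (z' k 0 - z k 0) =
    - \sum_k softmax z' k 0 * (z k 0 - z' k 0)
    + \sum_k a k 0 * z k 0 - \sum_k a k 0 * z' k 0.
  by rewrite -!sumrN -!big_split /=; apply: eq_bigr => k _; ring.
lra.
Qed.

End CrossEntropy.

Lemma sum_Lvec_le (R : realType) J N (U Z A : 'M[R]_(J, N)) :
  (0 < J)%N -> (forall n, one_hot (col n A)) ->
  \sum_(n < N) Lvec U A n
  <= Num.sqrt N%:R * (Num.sqrt (\sum_(n < N) Lvec Z A n ^+ 2) + Num.sqrt 2 * frob (U - Z)).
Proof.
move=> J_gt0 A1.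
apply: le_trans (_ : \sum_n Lvec Z A n + Num.sqrt 2 * \sum_n frob (col n (U - Z)) <= _).
  rewrite mulr_sumr -big_split; apply: ler_sum => n _.
  have -> : col n (U - Z) = col n U - col n Z by apply/matrixP => i j; rewrite !mxE.
  exact: ce_loss_lipschitz.
rewrite mulrDr; apply: lerD; first exact: sum_le_sqrt_card.
by rewrite mulrCA ler_wpM2l ?sqrtr_ge0 ?sum_frob_col_le.
Qed.

Lemma Lmean_le (R : realType) J N (Z A : 'M[R]_(J, N)) (y : R) : (0 < N)%N ->
  \sum_(n < N) Lvec Z A n <= Num.sqrt N%:R * y -> Lmean Z A <= (Num.sqrt N%:R)^-1 * y.
Proof.
move=> N_gt0 sum_le; set sN := Num.sqrt N%:R in sum_le *.
have sN_gt0 : 0 < sN by rewrite sqrtr_gt0 ltr0n.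
rewrite /Lmean -(sqr_sqrtr (ler0n R N)) -/sN expr2 invfM -mulrA.
apply: ler_wpM2l; first by rewrite invr_ge0 ltW.
by rewrite ler_pdivrMl.
Qed.

Lemma mulr_sum_expr (R : realFieldType) (B : R) (g : nat -> R) k :
  B * \sum_(0 <= l < k.+1) B ^+ (k - l) * g l
  = \sum_(0 <= l < k.+1) B ^+ (k.+1 - l) * g l.
Proof.
rewrite mulr_sumr; apply: eq_big_nat => l /andP[_ lk].
by rewrite subSn // exprS mulrA.
Qed.

Section Network.
Variables (R : realType) (d M J N m : nat) (sigma : R -> R) (X : 'M[R]_(d, N)) (A : 'M[R]_(J, N))
  (W1 : 'M[R]_(M, d)) (W : nat -> 'M[R]_M) (WL : 'M[R]_(J, M))
  (b : nat -> 'cV[R]_M) (c : nat -> 'M[R]_(M, N)).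

(* Layers are shifted by one: [preact k] is the pre-activation of layer k+1 on the
   whole batch, to be compared with the auxiliary variable [c k.+1], and
   [layer_gap k] is the residual of layer k+1 in the separation loss. *)
Fixpoint preact (k : nat) : 'M[R]_(M, N) :=
  match k with
  | 0 => W1 *m X + b 1%N *m ones_row R N
  | k'.+1 => W k.+1 *m act sigma (preact k') + b k.+1 *m ones_row R N
  end.

Definition layer_gap (k : nat) : 'M[R]_(M, N) :=
  match k with
  | 0 => W1 *m X + b 1%N *m ones_row R N - c 1%N
  | k'.+1 => W k.+1 *m act sigma (c k) + b k.+1 *m ones_row R N - c k.+1
  end.

Lemma hidden_col k (n : 'I_N) (i : 'I_M) :
  hidden sigma W1 W b k (col n X) i 0 = act sigma (preact k) i n.
Proof.
elim: k i => [|k IH] i /=; rewrite !mxE; congr sigma;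
  rewrite big_ord1 /ones_row !mxE mulr1; congr (_ + _);
  by apply: eq_bigr => j _; rewrite ?mxE ?IH ?mxE.
Qed.

Lemma phi_FNN_mxE : phi_FNN_mx sigma m.+2 W1 W WL b X = WL *m act sigma (preact m).
Proof.
apply/matrixP => j n; rewrite mxE /phi_FNN subn2 !mxE.
by apply: eq_bigr => k _; rewrite hidden_col.
Qed.

Let om := omega m.+2 W1 W WL.

Lemma om_ge0 l : 0 <= om l.
Proof.
apply: prodr_ge0 => j _; rewrite /frobW.
by case: ifP => _; [|case: ifP => _]; exact: frob2_ge0.
Qed.

Lemma omS k : (k < m)%N -> om k.+1 = frob2 (W k.+2) * om k.+2.
Proof.
move=> km; rewrite /om /omega big_ltn ?ltnS 1?ltnW //; congr (_ * _).
by rewrite /frobW /= !eqSS (ltn_eqF km).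
Qed.

Lemma om_last : om m.+1 = frob2 WL.
Proof. by rewrite /om /omega big_nat1 /frobW /= eqxx. Qed.

Definition weighted_gap l := Num.sqrt (om l.+1) * frob (layer_gap l).

Lemma S_sepE : S_sep sigma m.+2 X A W1 W WL b c =
  \sum_(n < N) Lvec (WL *m act sigma (c m.+1)) A n ^+ 2
  + \sum_(0 <= l < m.+1) weighted_gap l ^+ 2.
Proof.
have gap_sqr l : weighted_gap l ^+ 2 = om l.+1 * frob2 (layer_gap l).
  by rewrite exprMn frob_sqr sqr_sqrtr ?om_ge0.
rewrite big_nat_recl // gap_sqr /S_sep big_add1 /= big_add1 /= (addrC (om 1 * _)) [RHS]addrA.
by congr (_ + _ + _); apply: eq_bigr => l _; rewrite gap_sqr.
Qed.

Variable B : R.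
Hypothesis B_ge0 : 0 <= B.
Hypothesis sigma_lip : forall z1 z2, `|sigma z1 - sigma z2| <= B * `|z1 - z2|.

Lemma preactS_sub k : preact k.+1 - c k.+2 =
  W k.+2 *m (act sigma (preact k) - act sigma (c k.+1)) + layer_gap k.+1.
Proof. by rewrite /= mulmxBr !addrA subrK. Qed.

Lemma preact_dist_le k : (k <= m)%N ->
  Num.sqrt (om k.+1) * frob (preact k - c k.+1)
  <= \sum_(0 <= l < k.+1) B ^+ (k - l) * weighted_gap l.
Proof.
elim: k => [|k IH] km; first by rewrite big_nat1 subnn expr0 mul1r.
rewrite big_nat_recr //= subnn expr0 mul1r -mulr_sum_expr preactS_sub.
have step : Num.sqrt (om k.+2) * frob (W k.+2 *m (act sigma (preact k) - act sigma (c k.+1)))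
    <= B * (Num.sqrt (om k.+1) * frob (preact k - c k.+1)).
  rewrite (omS km) sqrtrM ?frob2_ge0 // -/(frob (W k.+2)).
  have := frob_mulmx_act_sub B_ge0 sigma_lip (W k.+2) (preact k) (c k.+1).
  have := sqrtr_ge0 (om k.+2); nra.
apply: le_trans (_ : Num.sqrt (om k.+2) *
    frob (W k.+2 *m (act sigma (preact k) - act sigma (c k.+1))) + weighted_gap k.+1 <= _).
  by rewrite /weighted_gap -mulrDr ler_wpM2l ?sqrtr_ge0 ?frobD.
rewrite lerD2r; apply: le_trans step _.
by rewrite ler_wpM2l ?B_ge0 ?IH ?(ltnW km).
Qed.

Lemma output_dist_le :
  frob (WL *m act sigma (preact m) - WL *m act sigma (c m.+1))
  <= \sum_(0 <= l < m.+1) B ^+ (m.+1 - l) * weighted_gap l.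
Proof.
rewrite -mulmxBr -mulr_sum_expr; apply: le_trans (frob_mulmx_act_sub B_ge0 sigma_lip _ _ _) _.
rewrite -/(frob WL) mulrCA ler_wpM2l ?B_ge0 //.
by rewrite /frob -om_last; exact: preact_dist_le.
Qed.

End Network.

Theorem theorem3p1 (R : realType) (L d M J N : nat)
  (hL : (2 <= L)%N) (hd : (1 <= d)%N) (hM : (1 <= M)%N) (hJ : (1 <= J)%N) (hN : (1 <= N)%N)
  (X : 'M[R]_(d, N)) (A : 'M[R]_(J, N))
  (hA : forall n : 'I_N, one_hot (col n A))
  (sigma : R -> R) (B : R) (hB : 0 < B)
  (hLip : forall z1 z2 : R, `|sigma z1 - sigma z2| <= B * `|z1 - z2|)
  (W1 : 'M[R]_(M, d)) (W : nat -> 'M[R]_M) (WL : 'M[R]_(J, M))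
  (b : nat -> 'cV[R]_M) (c : nat -> 'M[R]_(M, N)) :
  Lmean (phi_FNN_mx sigma L W1 W WL b X) A
  <= Num.max (Num.sqrt 2) (Num.max (2 * B) (2 * B ^+ (L - 1)))
     * Num.sqrt (L - 1)%:R * LS_FNN sigma L X A W1 W WL b c.
Proof.
have [m ->] : exists m, L = m.+2 by exists (L - 2)%N; rewrite -addn2 subnK.
rewrite subSS subn0 /LS_FNN S_sepE phi_FNN_mxE mulrCA.
set Z := WL *m act sigma (c m.+1).
set s0 := Num.sqrt (\sum_(n < N) Lvec Z A n ^+ 2).
have s0_sqr : s0 ^+ 2 = \sum_(n < N) Lvec Z A n ^+ 2.
  by rewrite sqr_sqrtr //; apply: sumr_ge0 => n _; exact: sqr_ge0.
have weighted := weighted_sum_le (ltW hB) s0 (weighted_gap m sigma X W1 W WL b c) m.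
rewrite s0_sqr in weighted.
apply: Lmean_le => //; apply: le_trans (sum_Lvec_le _ Z hJ hA) _.
rewrite ler_wpM2l ?sqrtr_ge0 //; apply: le_trans weighted.
rewrite lerD2l ler_wpM2l ?sqrtr_ge0 //; exact: output_dist_le (ltW hB) hLip.
Qed.
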